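(* Let $\beta\in(0,1)$ and $1\le t\le n$. With $q_{n,s}:=\beta^{n-s}\frac{1-\beta}{1-\beta^n}$ and $\lambda_{n,t}:=\sum_{i=t}^n\sum_{j=1}^{t-1}q_{n,i}q_{n,j}(i-j)$, it holds that $$\lambda_{n,t}\le\frac{(n-t+1)\beta^{n-t+1}}{1-\beta^n}.$$
   Context: An empty sum equals $0$. *)

From mathcomp Require Import all_boot all_order all_algebra.
Set Implicit Arguments. Unset Strict Implicit. Unset Printing Implicit Defensive.
Import Order.TTheory GRing.Theory Num.Theory.
Local Open Scope ring_scope.

(* q_{n,s} := beta^(n-s) (1-beta)/(1-beta^n), for 1 <= s <= n (nat subtraction n - s is exact there) *)
Definition q {R : realFieldType} (beta : R) (n s : nat) : R :=
  beta ^+ (n - s) * (1 - beta) / (1 - beta ^+ n).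

Definition lambda {R : realFieldType} (beta : R) (n t : nat) : R :=
  \sum_(t <= i < n.+1) \sum_(1 <= j < t)
     q beta n i * q beta n j * (i%:R - j%:R).

(* After reversing both summation ranges, [lambda] is [c^2 beta^m] times
   [sum_(a < m) sum_(k < r) beta^a beta^k (m + k - a)] with [m = n - t + 1],
   [r = t - 1] and [c = (1 - beta) / (1 - beta^n)].  The double sum splits into
   products of one-dimensional geometric and arithmetico-geometric sums, all
   of which have closed forms; this gives the exact value
   [lambda = beta^m (m (1 - beta^r) - r beta^r (1 - beta^m)) / (1 - beta^n)^2].
   The claimed bound exceeds it by [n beta^n (1 - beta^m) / (1 - beta^n)^2 >= 0]. *)
From mathcomp Require Import all_boot all_order all_algebra.
From mathcomp Require Import zify ring.
Import Order.TTheory GRing.Theory Num.Theory.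
Local Open Scope ring_scope.

Lemma big_nat_rev_ord (V : nmodType) (lo hi : nat) (F : nat -> V) :
  (lo <= hi)%N -> \sum_(lo <= i < hi) F i = \sum_(k < hi - lo) F (hi - k.+1)%N.
Proof.
move=> le_lo_hi; rewrite -{1}[lo]add0n big_addn big_mkord.
rewrite (reindex_inj rev_ord_inj) /=.
by apply: eq_bigr => k _; congr F; have := ltn_ord k; lia.
Qed.

Section GeometricSums.
Variable R : comPzRingType.
Variable b : R.

Lemma geometric_sum_mul (r : nat) : (1 - b) * \sum_(k < r) b ^+ k = 1 - b ^+ r.
Proof. by rewrite -opprB -(opprB (b ^+ r)) subrX1 mulNr. Qed.

Lemma arith_geometric_sum_mul (r : nat) :
  (1 - b) * \sum_(k < r) k%:R * b ^+ k = b * \sum_(k < r) b ^+ k - r%:R * b ^+ r.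
Proof.
(* Peel the sum over [r.+1] terms at the top and at the bottom. *)
have shift : \sum_(k < r.+1) k%:R * b ^+ k
           = b * \sum_(k < r) k%:R * b ^+ k + b * \sum_(k < r) b ^+ k.
  rewrite big_ord_recl /= mul0r add0r !mulr_sumr -big_split /=.
  by apply: eq_bigr => k _; rewrite /bump /= -natr1 exprS; ring.
rewrite big_ord_recr /= in shift.
have -> : (1 - b) * \sum_(k < r) k%:R * b ^+ k
        = (\sum_(k < r) k%:R * b ^+ k + r%:R * b ^+ r)
          - b * \sum_(k < r) k%:R * b ^+ k - r%:R * b ^+ r by ring.
by rewrite shift; ring.
Qed.

Lemma rev_arith_geometric_sum_mul (m : nat) :
  (1 - b) * \sum_(a < m) (m%:R - a%:R) * b ^+ a = m%:R - b * \sum_(a < m) b ^+ a.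
Proof.
have -> : \sum_(a < m) (m%:R - a%:R) * b ^+ a
        = m%:R * \sum_(a < m) b ^+ a - \sum_(a < m) a%:R * b ^+ a.
  by rewrite mulr_sumr -sumrB; apply: eq_bigr => a _; ring.
rewrite mulrBr mulrCA geometric_sum_mul arith_geometric_sum_mul; ring.
Qed.

Lemma double_geometric_sum_mul (m r : nat) :
  (1 - b) ^+ 2 * \sum_(a < m) \sum_(k < r) b ^+ a * b ^+ k * (m%:R + k%:R - a%:R)
  = m%:R * (1 - b ^+ r) - r%:R * b ^+ r * (1 - b ^+ m).
Proof.
set Gm := \sum_(a < m) b ^+ a; set Gr := \sum_(k < r) b ^+ k.
set Wm := \sum_(a < m) (m%:R - a%:R) * b ^+ a.
set Hr := \sum_(k < r) k%:R * b ^+ k.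
have -> : \sum_(a < m) \sum_(k < r) b ^+ a * b ^+ k * (m%:R + k%:R - a%:R)
          = Wm * Gr + Gm * Hr.
  rewrite !big_distrlr -big_split /=; apply: eq_bigr => a _.
  by rewrite -big_split /=; apply: eq_bigr => k _; ring.
have -> : (1 - b) ^+ 2 * (Wm * Gr + Gm * Hr)
          = ((1 - b) * Wm) * ((1 - b) * Gr) + ((1 - b) * Gm) * ((1 - b) * Hr) by ring.
rewrite rev_arith_geometric_sum_mul arith_geometric_sum_mul -/Gm -/Gr.
(* The leftover [Gm] and [Gr] terms cancel once [1 - b ^+ _] is folded back. *)
by rewrite -!geometric_sum_mul -/Gm -/Gr; ring.
Qed.

End GeometricSums.

Lemma lambda_numerator_le (R : realDomainType) (b : R) (m r : nat) :
  0 <= b -> b <= 1 ->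
  m%:R * (1 - b ^+ r) - r%:R * b ^+ r * (1 - b ^+ m) <= m%:R * (1 - b ^+ (m + r)).
Proof.
move=> b_ge0 b_le1; rewrite -subr_ge0.
have -> : m%:R * (1 - b ^+ (m + r))
          - (m%:R * (1 - b ^+ r) - r%:R * b ^+ r * (1 - b ^+ m))
          = (m + r)%:R * b ^+ r * (1 - b ^+ m) by rewrite natrD exprD; ring.
by rewrite !mulr_ge0 ?exprn_ge0 // subr_ge0 exprn_ile1.
Qed.

Lemma lambda_closed_form (R : realFieldType) (beta : R) (m r : nat) :
  lambda beta (m + r) r.+1
  = beta ^+ m * (m%:R * (1 - beta ^+ r) - r%:R * beta ^+ r * (1 - beta ^+ m))
    / (1 - beta ^+ (m + r)) ^+ 2.
Proof.
set c := (1 - beta) / (1 - beta ^+ (m + r)).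
have -> : lambda beta (m + r) r.+1 = c ^+ 2 * beta ^+ m *
    \sum_(a < m) \sum_(k < r) beta ^+ a * beta ^+ k * (m%:R + k%:R - a%:R).
  rewrite /lambda big_nat_rev_ord ?ltnS ?leq_addl // subSS addnK mulr_sumr.
  apply: eq_bigr => a _; have lt_a_m := ltn_ord a.
  rewrite big_nat_rev_ord // subSS subn0 mulr_sumr; apply: eq_bigr => k _.
  have lt_k_r := ltn_ord k.
  rewrite !subSS /q (_ : m + r - (m + r - a) = a)%N; last by lia.
  rewrite (_ : m + r - (r - k) = m + k)%N; last by lia.
  rewrite !natrB ?natrD; [| lia ..].
  by rewrite /c !exprD; ring.
by rewrite -double_geometric_sum_mul /c exprMn exprVn; ring.
Qed.

Theorem proposition5 (R : realFieldType) (beta : R) (n t : nat)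
  (hb0 : 0 < beta) (hb1 : beta < 1) (ht1 : (1 <= t)%N) (htn : (t <= n)%N) :
  lambda beta n t <= (n - t + 1)%:R * beta ^+ (n - t + 1) / (1 - beta ^+ n).
Proof.
have [r def_t] : exists r, t = r.+1 by exists t.-1; lia.
have [m def_n] : exists m, n = (m + r)%N by exists (n - r)%N; lia.
subst n t; rewrite (_ : (m + r - r.+1 + 1 = m)%N); last by lia.
have [b_ge0 b_le1] := (ltW hb0, ltW hb1).
have pos_denom : 0 < 1 - beta ^+ (m + r).
  by rewrite subr_gt0 exprn_ilt1 //; lia.
rewrite lambda_closed_form expr2 invfM mulrA ler_pM2r ?invr_gt0 // ler_pdivrMr //.
rewrite [in X in _ <= X](mulrC m%:R) -[in X in _ <= X]mulrA.
by rewrite ler_pM2l ?exprn_gt0 // lambda_numerator_le.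
Qed.
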